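(* Let $\alpha>0$ and $N\ge2$. If $\mu,\nu$ are probability measures on $\Omega_N$ such that $\mu\in\mathcal{S}$ and $\mu$ is stochastically dominated by $\nu$ (i.e. $\mu(f)\le\nu(f)$ for every increasing $f$), then $$\|\mu-\pi_{N,\alpha}\|_{TV}\le\|\nu-\pi_{N,\alpha}\|_{TV}.$$
   Context: $\Omega_N=\{x\in\mathbb{R}^{N-1}:0\le x_1\le\dots\le x_{N-1}\le N\}$, $x_0=0,x_N=N$; increasing means w.r.t. coordinatewise order. For $k\in\{1,\dots,N\}$, $\Omega_{k,N}=\{x\in\Omega_N:x_k=N\}$ (so $\Omega_{1,N}=\{(N,\dots,N)\}$, $\Omega_{N,N}=\Omega_N$). $\pi_{k,\alpha}$ is the law of $(x_1,\dots,x_{N-1})$ with $x_j=\sum_{i\le j}\eta_i$, where $\eta_1,\dots,\eta_k$ are i.i.d. Gamma with shape $\alpha$ (any rate) conditioned on $\sum_{i=1}^k\eta_i=N$, and $\eta_{k+1}=\dots=\eta_N=0$; $\pi_{N,\alpha}$ is the case $k=N$ (density proportional to $\prod_{i=1}^N(x_i-x_{i-1})^{\alpha-1}$). $\mathcal{S}_k$ is the set of probability measures supported on $\Omega_{k,N}$, absolutely continuous w.r.t. $\pi_{k,\alpha}$ with increasing density. $\mathcal{S}$ is the set of probability measures $\mu=\sum_{k=1}^N\gamma_k\mu_k$ with $\mu_k\in\mathcal{S}_k$, $\gamma_k\ge0$, $\sum\gamma_k=1$. *)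

From HB Require Import structures.
From mathcomp Require Import all_boot all_order all_algebra.
From mathcomp Require Import all_classical all_reals all_analysis.
Unset Printing Implicit Defensive.
Import Order.TTheory GRing.Theory Num.Theory.
Import numFieldNormedType.Exports.
Local Open Scope classical_set_scope.
Local Open Scope ring_scope.

Section defs.
Variable R : realType.

(* Points of R^(N-1): (N.-1)-tuples, with the product sigma-algebra
   (MathComp-Analysis' measurable structure on tuples). *)
Definition pt (N : nat) := (N.-1).-tuple R.

(* Extended coordinates of a sequence s = (s_1,...,s_(m-1)) :
   coord m c s 0 = 0, coord m c s j = s_j for 0<j<m, coord m c s j = c for j >= m. *)
Definition coord (m : nat) (c : R) (s : seq R) (j : nat) : R :=
  if j == 0%N then 0 else if (m <= j)%N then c else nth 0 s j.-1.

Definition OmegaN (N : nat) : set (pt N) :=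
  [set x | forall j, (j < N)%N -> coord N N%:R x j <= coord N N%:R x j.+1].

Definition OmegakN (N k : nat) : set (pt N) :=
  [set x | OmegaN N x /\ coord N N%:R x k = N%:R].

Definition leT (N : nat) (x y : pt N) := forall i, tnth x i <= tnth y i.
Definition increasing_on (N : nat) (D : set (pt N)) (f : pt N -> R) :=
  forall x y, D x -> D y -> leT N x y -> f x <= f y.

Fixpoint iint (n : nat) : (n.-tuple R -> \bar R) -> \bar R :=
  match n return (n.-tuple R -> \bar R) -> \bar R with
  | 0%N => fun F => F [tuple]
  | n'.+1 => fun F =>
      (\int[@lebesgue_measure R]_t iint n' (fun y : n'.-tuple R => F [tuple of t :: y]))%E
  end.

(* Unnormalised density of pi_{k,alpha} in the free coordinates
   y = (y_1,...,y_(k-1)), with y_0 = 0, y_k = N: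
   prod_{i=1}^k (y_i - y_(i-1))^(alpha-1) on {0 <= y_1 <= ... <= y_(k-1) <= N}. *)
Definition rho (alpha : R) (N k : nat) (y : (k.-1).-tuple R) : R :=
  if `[< forall j, (j < k)%N -> coord k N%:R y j <= coord k N%:R y j.+1 >]
  then \prod_(1 <= i < k.+1) (coord k N%:R y i - coord k N%:R y i.-1) `^ (alpha - 1)
  else 0.

Definition embed (N k : nat) (y : (k.-1).-tuple R) : pt N :=
  [tuple (if (i < k.-1)%N then nth 0 (y : seq R) i else N%:R) | i < N.-1].

Definition Zk (alpha : R) (N k : nat) : \bar R :=
  iint (k.-1) (fun y : (k.-1).-tuple R => (rho alpha N k y)%:E).

Definition piInt (alpha : R) (N k : nat) (h : pt N -> \bar R) : \bar R :=
  ((fine (Zk alpha N k))^-1)%:E *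
  iint (k.-1) (fun y : (k.-1).-tuple R => (rho alpha N k y)%:E * h (embed N k y))%E.

Definition pik (alpha : R) (N k : nat) (A : set (pt N)) : \bar R :=
  piInt alpha N k (fun x => (\1_A x)%:E).

Definition piN (alpha : R) (N : nat) := pik alpha N N.

Definition inSk (alpha : R) (N k : nat) (m : set (pt N) -> \bar R) :=
  exists g : pt N -> R,
    [/\ measurable_fun setT g, (forall x, 0 <= g x),
        increasing_on N (OmegakN N k) g &
        forall A, measurable A ->
          m A = piInt alpha N k (fun x => ((g x)%:E * (\1_A x)%:E)%E)].

Definition inS (alpha : R) (N : nat) (m : set (pt N) -> \bar R) :=
  exists (gam : 'I_N -> R) (mk : 'I_N -> probability (pt N) R),
    [/\ (forall i, 0 <= gam i), \sum_(i < N) gam i = 1,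
        (forall i : 'I_N, inSk alpha N i.+1 (mk i)) &
        forall A, measurable A ->
          m A = (\sum_(i < N) (gam i)%:E * mk i A)%E].

Definition stoch_le (N : nat) (mu nu : set (pt N) -> \bar R) :=
  forall f : pt N -> R, measurable_fun setT f -> increasing_on N (OmegaN N) f ->
    (\int[mu]_(x in OmegaN N) (f x)%:E <= \int[nu]_(x in OmegaN N) (f x)%:E)%E.

Definition tv (N : nat) (mu p : set (pt N) -> \bar R) : \bar R :=
  ereal_sup [set `|(mu A - p A)%E|%E | A in [set A : set (pt N) | measurable A]].

End defs.

From Pilot Require Import Defs.
From HB Require Import structures.
From mathcomp Require Import all_boot all_order all_algebra.
From mathcomp Require Import all_classical all_reals all_analysis.
From mathcomp Require Import measurable_realfun lra.
Import Order.TTheory GRing.Theory Num.Theory.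
Local Open Scope classical_set_scope.
Local Open Scope ring_scope.

(* Write mu = \sum_k gam_k mu_k with mu_k in S_k.  For k < N the measure mu_k lives on
   the face {x_(N-1) = N}, which is pi_N-null, so off that face mu has the density
   gam_N g with respect to pi_N, g increasing on Omega_N.  Hence
   A = Omega_N /\ ({x_(N-1) = N} \/ {gam_N g > 1}) is a positive set of a Hahn
   decomposition for mu - pi_N, and ||mu - pi_N||_TV = mu(A) - pi_N(A).  The set A is
   increasing in Omega_N, so mu(A) <= nu(A) by stochastic domination, whence
   ||mu - pi_N||_TV <= nu(A) - pi_N(A) <= ||nu - pi_N||_TV. *)

Section iterated_integral.
Context {R : realType}.
Local Open Scope ereal_scope.

Lemma measurable_fun_cons_pair n (F : n.+1.-tuple R -> \bar R) :
  measurable_fun setT F ->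
  measurable_fun setT (fun p : R * n.-tuple R => F [tuple of p.1 :: p.2]).
Proof.
move=> mF; apply: (measurableT_comp mF).
exact: measurable_cons measurable_fst measurable_snd.
Qed.

Lemma measurable_fun_cons n (F : n.+1.-tuple R -> \bar R) t :
  measurable_fun setT F -> measurable_fun setT (fun y : n.-tuple R => F [tuple of t :: y]).
Proof.
move=> mF; apply: (measurableT_comp mF).
by have := @measurable_cons _ _ _ _ (fun=> t) n id (measurable_cst t)
  (@measurable_id _ _ setT).
Qed.

Lemma iint_ge0 n (F : n.-tuple R -> \bar R) : (forall y, 0 <= F y) -> 0 <= iint R n F.
Proof.
elim: n F => [|n IH] F F0 /=; first exact: F0.
by apply: integral_ge0 => t _; apply: IH.
Qed.

Lemma measurable_iint n d (T : measurableType d) (F : T -> n.-tuple R -> \bar R) :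
  measurable_fun setT (fun p : T * n.-tuple R => F p.1 p.2) ->
  (forall x y, 0 <= F x y) -> measurable_fun setT (fun x => iint R n (F x)).
Proof.
elim: n d T F => [|n IH] d T F mF F0 /=.
  exact: measurableT_comp mF
    (measurable_fun_pair (@measurable_id _ _ setT) (measurable_cst [tuple])).
pose G (p : T * R) (y : n.-tuple R) := F p.1 [tuple of p.2 :: y].
have mG : measurable_fun setT (fun p => iint R n (G p)).
  apply: IH => [|p y]; last exact: F0.
  have fst2 := @measurable_fst _ _ (T * R)%type (n.-tuple R).
  have snd2 := @measurable_snd _ _ (T * R)%type (n.-tuple R).
  exact: measurableT_comp mF (measurable_fun_pair
    (measurableT_comp (@measurable_fst _ _ T R) fst2)
    (measurable_cons (measurableT_comp (@measurable_snd _ _ T R) fst2) snd2)).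
apply: (@measurable_fun_fubini_tonelli_F _ _ _ _ _ lebesgue_measure _ mG) => p.
by apply: iint_ge0 => y; exact: F0.
Qed.

Lemma measurable_iint_cons n (F : n.+1.-tuple R -> \bar R) :
  measurable_fun setT F -> (forall y, 0 <= F y) ->
  measurable_fun setT (fun t => iint R n (fun y => F [tuple of t :: y])).
Proof.
move=> mF F0; apply: (@measurable_iint n _ R (fun t y => F [tuple of t :: y])) => //.
exact: measurable_fun_cons_pair.
Qed.

Lemma ge0_iintD n (F G : n.-tuple R -> \bar R) :
  measurable_fun setT F -> measurable_fun setT G ->
  (forall y, 0 <= F y) -> (forall y, 0 <= G y) ->
  iint R n (fun y => F y + G y) = iint R n F + iint R n G.
Proof.
elim: n F G => [//|n IH] F G mF mG F0 G0 /=.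
rewrite -ge0_integralD //.
- by apply: eq_integral => t _; rewrite IH //; exact: measurable_fun_cons.
- by move=> t _; apply: iint_ge0.
- exact: measurable_iint_cons.
- by move=> t _; apply: iint_ge0.
- exact: measurable_iint_cons.
Qed.

Lemma ge0_iintZl n (F : n.-tuple R -> \bar R) (k : R) :
  measurable_fun setT F -> (forall y, 0 <= F y) -> (0 <= k)%R ->
  iint R n (fun y => k%:E * F y) = k%:E * iint R n F.
Proof.
elim: n F => [//|n IH] F mF F0 k0 /=.
rewrite -ge0_integralZl //.
- by apply: eq_integral => t _; rewrite IH //; exact: measurable_fun_cons.
- exact: measurable_iint_cons.
- by move=> t _; apply: iint_ge0.
Qed.

Lemma ge0_le_iint n (F G : n.-tuple R -> \bar R) :
  measurable_fun setT F -> measurable_fun setT G ->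
  (forall y, 0 <= F y) -> (forall y, F y <= G y) -> iint R n F <= iint R n G.
Proof.
elim: n F G => [|n IH] F G mF mG F0 FG /=; first exact: FG.
have G0 y : 0 <= G y by apply: le_trans (FG y).
apply: ge0_le_integral.
- exact: measurableT.
- by move=> t _; apply: iint_ge0.
- exact: measurable_iint_cons.
- exact: measurable_iint_cons.
- by move=> t _; apply: IH => //; exact: measurable_fun_cons.
Qed.

Lemma iint0_eq n (F : n.-tuple R -> \bar R) : (forall y, F y = 0) -> iint R n F = 0.
Proof.
elim: n F => [|n IH] F F0 /=; first exact: F0.
by apply: integral0_eq => t _; apply: IH.
Qed.

Lemma iint0_off_hyperplane n (i : 'I_n) (c : R) (F : n.-tuple R -> \bar R) :
  (forall y, tnth y i != c -> F y = 0) -> iint R n F = 0.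
Proof.
elim: n i F => [[]//|n IH] i F F0 /=.
have [j|] := unliftP ord0 i => ij; rewrite {i}ij in F0.
  apply: integral0_eq => t _; apply: (IH j) => y yj.
  by apply: F0; rewrite tnthS.
set f := fun t => _.
rewrite (_ : f = f \_ [set c]); first by rewrite -integral_mkcond integral_set1.
apply/funext => t; rewrite patchE; case: ifPn => // /negP; rewrite inE => tc.
by rewrite /f iint0_eq // => y; apply: F0 => /=; apply/eqP.
Qed.

End iterated_integral.

Section coordinates.
Context {R : realType}.

Lemma measurable_nth m i : measurable_fun setT (fun y : m.-tuple R => nth 0 (y : seq R) i).
Proof.
have [im|mi] := ltnP i m.
  rewrite (_ : (fun y : m.-tuple R => _) = fun y => tnth y (Ordinal im)).
    exact: measurable_tnth.
  by apply/funext => y; rewrite (tnth_nth 0).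
rewrite (_ : (fun y : m.-tuple R => _) = cst 0); first exact: measurable_cst.
by apply/funext => y; rewrite nth_default // size_tuple.
Qed.

Lemma measurable_coord k c j :
  measurable_fun setT (fun y : k.-1.-tuple R => Defs.coord R k c y j).
Proof.
rewrite /Defs.coord; case: eqP => _; first exact: measurable_cst.
by case: leqP => _; [exact: measurable_cst | exact: measurable_nth].
Qed.

Lemma measurable_coord_sorted k c : measurable [set y : k.-1.-tuple R |
  forall j, (j < k)%N -> Defs.coord R k c y j <= Defs.coord R k c y j.+1].
Proof.
rewrite (_ : [set y | _] = \bigcap_(j in `I_k)
    [set y : k.-1.-tuple R | Defs.coord R k c y j <= Defs.coord R k c y j.+1]).
  apply: bigcap_measurableType => j _.
  have := measurable_funB (measurable_coord k c j.+1) (measurable_coord k c j)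
    measurableT (measurable_itv `[0, +oo[).
  rewrite setTI; congr measurable; apply/seteqP; split => y /=;
    by rewrite in_itv /= andbT subr_ge0.
by apply/seteqP; split => y /= H j; apply: H.
Qed.

Lemma measurable_OmegaN N : measurable (OmegaN R N).
Proof. exact: measurable_coord_sorted. Qed.

Lemma measurable_rho alpha N k : measurable_fun setT (rho R alpha N k).
Proof.
apply: measurable_fun_ifT.
- apply: (measurable_fun_bool true); rewrite setTI.
  rewrite (_ : _ @^-1` _ = [set y : k.-1.-tuple R |
      forall j, (j < k)%N -> Defs.coord R k N%:R y j <= Defs.coord R k N%:R y j.+1]).
    exact: measurable_coord_sorted.
  by apply/seteqP; split => y /= /asboolP.
- apply: measurable_prod => i _; apply: measurableT_comp (measurable_powR _) _.
  by apply: measurable_funB; exact: measurable_coord.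
- exact: measurable_cst.
Qed.

Lemma rho_ge0 alpha N k y : 0 <= rho R alpha N k y.
Proof.
rewrite /rho; case: ifP => // _.
by apply: prodr_ge0 => i _; exact: powR_ge0.
Qed.

Lemma embed_id N (y : N.-1.-tuple R) : embed R N N y = y.
Proof. by apply: eq_from_tnth => i; rewrite tnth_mktuple ltn_ord (tnth_nth 0). Qed.

End coordinates.

Lemma indicU_disjoint {R : realType} {T} (A B : set T) x : A `&` B = set0 ->
  \1_(A `|` B) x = \1_A x + \1_B x :> R.
Proof.
move=> AB0; rewrite !indicE; have [Ax|nAx] := boolP (x \in A).
  have nBx : x \notin B.
    apply/negP; rewrite inE => Bx; rewrite inE in Ax.
    by have : (A `&` B) x by []; rewrite AB0.
  by rewrite (negbTE nBx) in_setU Ax addr0.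
by rewrite in_setU (negbTE nAx) add0r.
Qed.

Section pi_integral.
Context {R : realType} (alpha : R) (N : nat).
Local Open Scope ereal_scope.
Implicit Types f : pt R N -> R.

Local Notation piInt := (piInt R alpha N N).
Local Notation c := ((fine (Zk R alpha N N))^-1)%R.

Lemma piInt_EFin f :
  piInt (fun x => (f x)%:E) = c%:E * iint R N.-1 (fun y => (rho R alpha N N y * f y)%:E).
Proof.
by rewrite /piInt; congr (_ * iint _ _ _); apply/funext => y; rewrite embed_id -EFinM.
Qed.

Lemma Zk_ge0 : 0 <= Zk R alpha N N.
Proof. by apply: iint_ge0 => y; rewrite lee_fin rho_ge0. Qed.

Let c_ge0 : (0 <= c)%R.
Proof. by rewrite invr_ge0 fine_ge0 // Zk_ge0. Qed.

Let measurable_rhoM f : measurable_fun setT f ->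
  measurable_fun setT (fun y => (rho R alpha N N y * f y)%:E).
Proof.
by move=> mf; apply/measurable_EFinP/measurable_funM => //; exact: measurable_rho.
Qed.

Let rhoM_ge0 f : (forall x, 0 <= f x)%R -> forall y, 0 <= (rho R alpha N N y * f y)%:E.
Proof. by move=> f0 y; rewrite lee_fin mulr_ge0 ?rho_ge0. Qed.

Lemma piInt_ge0 f : (forall x, 0 <= f x)%R -> 0 <= piInt (fun x => (f x)%:E).
Proof.
by move=> f0; rewrite piInt_EFin mule_ge0 ?lee_fin //; apply: iint_ge0; exact: rhoM_ge0.
Qed.

Lemma ge0_piIntD f1 f2 : measurable_fun setT f1 -> measurable_fun setT f2 ->
  (forall x, 0 <= f1 x)%R -> (forall x, 0 <= f2 x)%R ->
  piInt (fun x => (f1 x + f2 x)%:E) =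
  piInt (fun x => (f1 x)%:E) + piInt (fun x => (f2 x)%:E).
Proof.
move=> mf1 mf2 f10 f20; rewrite !piInt_EFin -muleDr //; last first.
  by apply: ge0_adde_def; rewrite inE; apply: iint_ge0; exact: rhoM_ge0.
rewrite -ge0_iintD.
  by congr (_ * iint _ _ _); apply/funext => y; rewrite mulrDr EFinD.
all: by [exact: measurable_rhoM | exact: rhoM_ge0].
Qed.

Lemma ge0_piIntZl f (k : R) :
  measurable_fun setT f -> (forall x, 0 <= f x)%R -> (0 <= k)%R ->
  piInt (fun x => (k * f x)%:E) = k%:E * piInt (fun x => (f x)%:E).
Proof.
move=> mf f0 k0; rewrite !piInt_EFin muleCA; congr (_ * _); rewrite -ge0_iintZl //.
- by congr (iint _ _ _); apply/funext => y; rewrite -EFinM mulrCA.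
- exact: measurable_rhoM.
- exact: rhoM_ge0.
Qed.

Lemma ge0_le_piInt f1 f2 : measurable_fun setT f1 -> measurable_fun setT f2 ->
  (forall x, 0 <= f1 x)%R -> (forall x, f1 x <= f2 x)%R ->
  piInt (fun x => (f1 x)%:E) <= piInt (fun x => (f2 x)%:E).
Proof.
move=> mf1 mf2 f10 f12; rewrite !piInt_EFin lee_wpmul2l ?lee_fin //.
apply: ge0_le_iint; [exact: measurable_rhoM | exact: measurable_rhoM | exact: rhoM_ge0 |].
by move=> y; rewrite lee_fin ler_wpM2l ?rho_ge0.
Qed.

Lemma piN_ge0 X : 0 <= piN R alpha N X.
Proof. by apply: piInt_ge0 => x; rewrite indicE ler0n. Qed.

Lemma piN_set0 : piN R alpha N set0 = 0.
Proof. by rewrite /piN /pik indic0 piInt_EFin iint0_eq ?mule0 // => y; rewrite mulr0. Qed.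

Lemma piN_additive2 : additive2 (piN R alpha N).
Proof.
move=> A B mA mB AB0; rewrite /piN /pik -ge0_piIntD ?measurable_indic //.
by congr (piInt _); apply/funext => x; rewrite indicU_disjoint.
Qed.

HB.instance Definition _ := isContent.Build _ _ R (piN R alpha N) piN_ge0
  ((additive2P piN_set0).2 piN_additive2).

(* Only an inequality: when Zk is 0 or +oo, the junk values of fine and ^-1 make
   piN vanish. *)
Lemma piN_setT_le1 : piN R alpha N setT <= 1.
Proof.
rewrite /piN /pik piInt_EFin.
under eq_fun do rewrite indicT mulr1.
rewrite -/(Zk R alpha N N); have := Zk_ge0.
case: (Zk R alpha N N) => [z|_|//] /=; last by rewrite invr0 mul0e.
rewrite lee_fin => z0; have [->|zn0] := eqVneq z 0%R; first by rewrite invr0 mul0e.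
by rewrite -EFinM mulVf.
Qed.

Section density.
Variables (g : pt R N -> R) (k : R) (X : set (pt R N)).
Hypotheses (mg : measurable_fun setT g) (g0 : forall x, (0 <= g x)%R) (k0 : (0 <= k)%R).
Hypothesis mX : measurable X.

Let mgX : measurable_fun setT (fun x => g x * \1_X x)%R.
Proof. exact: measurable_funM mg (measurable_indic mX). Qed.

Let gX_ge0 x : (0 <= g x * \1_X x)%R.
Proof. by rewrite mulr_ge0. Qed.

Let density_scaleE :
  k%:E * piInt (fun x => (g x)%:E * (\1_X x)%:E) = piInt (fun x => (k * (g x * \1_X x))%:E).
Proof. by rewrite ge0_piIntZl //; under eq_fun do rewrite EFinM. Qed.

Lemma density_le_piN : (forall x, X x -> k * g x <= 1)%R ->
  k%:E * piInt (fun x => (g x)%:E * (\1_X x)%:E) <= piN R alpha N X.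
Proof.
move=> kg1; rewrite density_scaleE; apply: ge0_le_piInt => [||x|x].
- exact: measurable_funM (measurable_cst k) mgX.
- exact: measurable_indic.
- by rewrite mulr_ge0.
- by rewrite !indicE; case: (boolP (x \in X)) => [/set_mem/kg1|_]; rewrite ?mulr1 ?mulr0.
Qed.

Lemma piN_le_density : (forall x, X x -> 1 <= k * g x)%R ->
  piN R alpha N X <= k%:E * piInt (fun x => (g x)%:E * (\1_X x)%:E).
Proof.
move=> kg1; rewrite density_scaleE; apply: ge0_le_piInt => [||x|x].
- exact: measurable_indic.
- exact: measurable_funM (measurable_cst k) mgX.
- by rewrite indicE ler0n.
- by rewrite !indicE; case: (boolP (x \in X)) => [/set_mem/kg1|_]; rewrite ?mulr1 ?mulr0.
Qed.

End density.

End pi_integral.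

Section hahn_decomposition.
Local Open Scope ereal_scope.
Context d (T : measurableType d) (R : realType) (mu p : {content set T -> \bar R}).
Variable A : set T.
Hypotheses (mA : measurable A) (mu_fin : mu setT < +oo) (p_le_mu : p setT <= mu setT).
Hypothesis p_le_mu_in : forall X, measurable X -> X `<=` A -> p X <= mu X.
Hypothesis mu_le_p_out : forall X, measurable X -> X `<=` ~` A -> mu X <= p X.

Let fin_num_content (m : {content set T -> \bar R}) X :
  m setT < +oo -> measurable X -> m X \is a fin_num.
Proof.
move=> mfin mX; rewrite ge0_fin_numE ?measure_ge0 //.
by apply: le_lt_trans mfin; rewrite le_measure ?inE.
Qed.

Let fine_measureDI (m : {content set T -> \bar R}) X Y : m setT < +oo ->
  measurable X -> measurable Y ->
  fine (m X) = (fine (m (X `\` Y)) + fine (m (X `&` Y)))%R.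
Proof.
move=> mfin mX mY; rewrite (measureDI m mX mY) fineD //; apply: fin_num_content => //.
  exact: measurableD.
exact: measurableI.
Qed.

Lemma hahn_decomposition_bound B : measurable B -> `|mu B - p B| <= mu A - p A.
Proof.
move=> mB; have p_fin : p setT < +oo by apply: le_lt_trans mu_fin.
have mu_fin_num X : measurable X -> mu X \is a fin_num by exact: fin_num_content.
have p_fin_num X : measurable X -> p X \is a fin_num by exact: fin_num_content.
have fine_out X : measurable X -> X `<=` ~` A -> (fine (mu X) <= fine (p X))%R.
  by move=> mX XA; rewrite fine_le ?mu_fin_num ?p_fin_num ?mu_le_p_out.
have fine_in X : measurable X -> X `<=` A -> (fine (p X) <= fine (mu X))%R.
  by move=> mX XA; rewrite fine_le ?mu_fin_num ?p_fin_num ?p_le_mu_in.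
(* Splitting B, A, ~` A and setT in two reduces the claim to linear arithmetic. *)
have mAc := measurableC mA.
have mBA := measurableD mB mA; have mBIA := measurableI _ _ mB mA.
have mAB := measurableD mA mB; have mAcB := measurableD mAc mB.
have := fine_measureDI _ _ _ mu_fin mB mA; have := fine_measureDI _ _ _ p_fin mB mA.
have := fine_measureDI _ _ _ mu_fin mA mB; have := fine_measureDI _ _ _ p_fin mA mB.
have := fine_measureDI _ _ _ mu_fin mAc mB; have := fine_measureDI _ _ _ p_fin mAc mB.
have := fine_measureDI _ _ _ mu_fin measurableT mA.
have := fine_measureDI _ _ _ p_fin measurableT mA.
rewrite setTD setTI (setIC A) setIC -setDE.
have := fine_out _ mBA (fun x => @proj2 _ _); have := fine_out _ mAcB (fun x => @proj1 _ _).
have := fine_in _ mAB (fun x => @proj1 _ _); have := fine_in _ mBIA (fun x => @proj2 _ _).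
have : (fine (p setT) <= fine (mu setT))%R by rewrite fine_le ?mu_fin_num ?p_fin_num.
rewrite -(fineK (mu_fin_num _ mB)) -(fineK (p_fin_num _ mB)).
rewrite -(fineK (mu_fin_num _ mA)) -(fineK (p_fin_num _ mA)) -!EFinB lee_fin ler_norml.
by move=> *; apply/andP; split; lra.
Qed.

End hahn_decomposition.

Lemma stoch_le_upset {R : realType} N (mu nu : probability (pt R N) R) (A : set (pt R N)) :
  stoch_le R N mu nu -> measurable A -> A `<=` OmegaN R N ->
  (forall x y, A x -> OmegaN R N y -> leT R N x y -> A y) -> (mu A <= nu A)%E.
Proof.
move=> munu mA AO Aup.
have incA : increasing_on R N (OmegaN R N) (\1_A).
  move=> x y _ Oy xy; rewrite !indicE.
  by have [/set_mem/Aup/(_ Oy xy)/mem_set ->|_] := boolP (x \in A); rewrite ?lexx ?ler0n.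
have mO := @measurable_OmegaN R N.
by have := munu _ (measurable_indic mA) incA; rewrite !integral_indic // !(setIidl AO).
Qed.

Section upper_face.
Context {R : realType} (alpha : R) (n : nat).
Local Notation N := n.+2.

(* The face {x_(N-1) = N}; its trace on Omega_N is Omega_(N-1,N). *)
Definition upper_face : set (pt R N) := [set x | tnth x ord_max = N%:R].

Lemma measurable_upper_face : measurable upper_face.
Proof.
have := @measurable_tnth _ R n.+1 ord_max measurableT _ (measurable_set1 N%:R).
by rewrite setTI.
Qed.

Lemma upper_face_up x y : OmegaN R N y -> leT R N x y -> upper_face x -> upper_face y.
Proof.
move=> Oy xy xN; apply/eqP; rewrite eq_le -{2}xN xy andbT.
by have := Oy n.+1 (ltnSn _); rewrite /Defs.coord /= ltnn leqnn /= (tnth_nth 0).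
Qed.

Lemma piN_upper_face0 X : X `<=` upper_face -> piN R alpha N X = 0%E.
Proof.
move=> XS; rewrite /piN /pik piInt_EFin (@iint0_off_hyperplane _ _ ord_max N%:R) ?mule0 //.
by move=> y yN; rewrite indicE memNset ?mulr0 // => /XS /eqP; apply/negP.
Qed.

Lemma inSk_off_upper_face0 k (m : set (pt R N) -> \bar R) X : (k < N)%N ->
  inSk R alpha N k m -> measurable X -> X `&` upper_face = set0 -> m X = 0%E.
Proof.
move=> kN [g [_ _ _ gE]] mX XS0; rewrite gE // /piInt iint0_eq ?mule0 // => y.
rewrite indicE memNset ?mule0 // => Xy.
suff : (X `&` upper_face) (embed R N k y) by rewrite XS0.
split => //; rewrite /upper_face /= tnth_mktuple ifF //.
by apply/negbTE; rewrite -leqNgt -subn1 leq_subLR add1n -ltnS.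
Qed.

End upper_face.

Section mixture.
Context {R : realType} (alpha : R) (n : nat).
Local Notation N := n.+2.
Variables (mu : probability (pt R N) R) (gam : 'I_N -> R).
Variables (mk : 'I_N -> probability (pt R N) R) (g : pt R N -> R).
Hypothesis gam_ge0 : forall i, 0 <= gam i.
Hypothesis mkS : forall i : 'I_N, inSk R alpha N i.+1 (mk i).
Hypothesis muE : forall A, measurable A -> mu A = (\sum_(i < N) (gam i)%:E * mk i A)%E.
Hypothesis mu_OmegaNC : mu (~` OmegaN R N) = 0%E.
Hypotheses (mg : measurable_fun setT g) (g_ge0 : forall x, 0 <= g x).
Hypothesis g_up : increasing_on R N (OmegakN R N N) g.
Hypothesis gE : forall A, measurable A ->
  mk ord_max A = piInt R alpha N N (fun x => ((g x)%:E * (\1_A x)%:E)%E).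

Local Notation gamN := (gam ord_max).

Lemma mixture_ge_last X : measurable X -> (gamN%:E * mk ord_max X <= mu X)%E.
Proof.
move=> mX; rewrite muE // (bigD1 ord_max) //= leeDl // sume_ge0 // => i _.
by rewrite mule_ge0 ?lee_fin.
Qed.

Lemma mixture_off_upper_faceE X : measurable X -> X `&` upper_face n = set0 ->
  mu X = (gamN%:E * mk ord_max X)%E.
Proof.
move=> mX XS0; rewrite muE // (bigD1 ord_max) //= big1 ?adde0 // => i iN.
rewrite (@inSk_off_upper_face0 _ alpha n i.+1 (mk i) X) ?mule0 //.
rewrite ltnS ltn_neqAle -ltnS ltn_ord andbT.
by apply: contra iN => /eqP iN; apply/eqP/val_inj.
Qed.

Definition hahn_set := OmegaN R N `&` (upper_face n `|` [set x | 1 < gamN * g x]).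

Lemma measurable_hahn_set : measurable hahn_set.
Proof.
apply: measurableI; first exact: measurable_OmegaN.
apply: measurableU; first exact: measurable_upper_face.
have := measurable_funM (measurable_cst gamN) mg measurableT (measurable_itv `]1, +oo[).
by rewrite setTI; congr measurable; apply/seteqP; split => x /=; rewrite in_itv /= andbT.
Qed.

Lemma hahn_set_up x y : hahn_set x -> OmegaN R N y -> leT R N x y -> hahn_set y.
Proof.
have OmegakNN z : OmegaN R N z -> OmegakN R N N z.
  by move=> Oz; split => //; rewrite /Defs.coord /= leqnn.
move=> [Ox [Sx|Gx]] Oy xy; split => //=.
  by left; exact: upper_face_up Sx.
right; apply: lt_le_trans Gx _; rewrite ler_wpM2l //.
exact: g_up (OmegakNN _ Ox) (OmegakNN _ Oy) xy.
Qed.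

Lemma piN_le_mixture X :
  measurable X -> X `<=` hahn_set -> (piN R alpha N X <= mu X)%E.
Proof.
move=> mX XA; have mS := @measurable_upper_face R n.
rewrite (measureDI (piN R alpha N) mX mS) /= [X in (_ + X)%E]piN_upper_face0 ?adde0;
  last exact: subIsetr.
have mXS := measurableD mX mS.
apply: (@le_trans _ _ (mu (X `\` upper_face n))); last by rewrite le_measure ?inE.
apply: (le_trans _ (mixture_ge_last _ mXS)); rewrite gE //.
apply: piN_le_density => //.
by move=> x [/XA [_ [//|/ltW]]].
Qed.

Lemma mixture_le_piN X :
  measurable X -> X `<=` ~` hahn_set -> (mu X <= piN R alpha N X)%E.
Proof.
move=> mX XA; have mO := @measurable_OmegaN R N; have mXO := measurableI _ _ mX mO.
rewrite (measureDI mu mX mO) (subset_measure0 _ _ _ mu_OmegaNC) ?add0e; last 3 first.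
- exact: measurableD.
- exact: measurableC.
- by move=> x [].
rewrite /= mixture_off_upper_faceE //; last first.
  apply/seteqP; split => x // [[Xx Ox] Sx].
  by apply: (XA x Xx); split => //; left.
rewrite gE //; apply: le_trans (density_le_piN _ _ _ _ _ mg g_ge0 (gam_ge0 _) mXO _) _.
- move=> x [Xx Ox]; rewrite leNgt; apply/negP => Gx.
  by apply: (XA x Xx); split => //; right.
- by rewrite le_measure ?inE //; apply: subIsetl.
Qed.

End mixture.

Theorem lemma6p1 (R : realType) (alpha : R) (N : nat)
  (mu nu : probability (pt R N) R) :
  0 < alpha -> (2 <= N)%N ->
  mu (~` OmegaN R N) = 0%E -> nu (~` OmegaN R N) = 0%E ->
  inS R alpha N mu -> stoch_le R N mu nu ->
  (tv R N mu (piN R alpha N) <= tv R N nu (piN R alpha N))%E.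
Proof.
case: N mu nu => [|[|n]] // mu nu _ _ mu_OmegaNC _ [gam [mk [gam_ge0 _ mkS muE]]] munu.
have [g [mg g_ge0 g_up gE]] := mkS ord_max.
pose A := hahn_set n gam g.
have mA : measurable A by exact: measurable_hahn_set.
have mu_fin : (mu setT < +oo)%E by rewrite probability_setT ltry.
have pi_le_mu : (piN R alpha n.+2 setT <= mu setT)%E.
  by rewrite probability_setT piN_setT_le1.
have bound B : measurable B ->
    (`|mu B - piN R alpha n.+2 B| <= mu A - piN R alpha n.+2 A)%E.
  apply: hahn_decomposition_bound => // X mX XA /=.
    exact: piN_le_mixture gam_ge0 muE mg g_ge0 gE X mX XA.
  exact: mixture_le_piN gam_ge0 mkS muE mu_OmegaNC mg g_ge0 gE X mX XA.
have muA_le_nuA : (mu A <= nu A)%E.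
  apply: stoch_le_upset => //; first by move=> x [].
  by move=> x y; exact: hahn_set_up.
apply: (@le_trans _ _ (mu A - piN R alpha n.+2 A)%E).
  by apply: ge_ereal_sup => _ [B mB <-]; exact: bound.
apply: (@le_trans _ _ (`|nu A - piN R alpha n.+2 A|)%E).
  by apply: le_trans (lee_abs _); apply: leeB.
by apply: ereal_sup_ubound; exists A.
Qed.
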